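(* Let $T$ be a trace (well formed, with a matching release for each acquire) and let $<$ be a strict partial order on $\mathrm{evts}(T)$ satisfying the MHB-Criteria. Then every predictable deadlock in $T$ for the lock set function $\mathrm{LH}_{<}$ is also a predictable deadlock in $T$ for the lock set function $\mathrm{LH}_T$; i.e. $\mathrm{PD}(\mathrm{LH}_{<})\subseteq\mathrm{PD}(\mathrm{LH}_T)$.
   Context: Events and traces. An event is a triple $e=(\alpha,t,op)$ with a unique identifier $\alpha$, a thread id $t$ and an operation $op$, which is one of $\mathit{rd}(x)$, $\mathit{wr}(x)$ (read/write of a shared variable $x$) or $\mathit{req}(l)$, $\mathit{acq}(l)$, $\mathit{rel}(l)$ (request, acquire, release of a lock $l$). Write $\mathrm{thd}(e)=t$. A trace is a finite list of events with distinct identifiers; $e\in T$ means $e$ occurs in $T$, $\mathrm{evts}(T)$ is its set of events, and $e<_T f$ means $e$ occurs at an earlier position than $f$ in $T$. An event $e$ is final in $T$ if there is no $f\in T$ with $e<_T f$ and $\mathrm{thd}(f)=\mathrm{thd}(e)$. Well formedness. $T$ is well formed if: (WF-Acq) for all $a=(t,\mathit{acq}(l))$, $a'=(t',\mathit{acq}(l))$ in $T$ with $a<_T a'$ there is $r=(t,\mathit{rel}(l))\in T$ with $a<_T r<_T a'$; (WF-Rel) for every $r=(t,\mathit{rel}(l))\in T$ there is $a=(t,\mathit{acq}(l))\in T$ with $a<_T r$ and no $r'=(t',\mathit{rel}(l))\in T$ with $a<_T r'<_T r$; (WF-Req) for every $a=(t,\mathit{acq}(l))\in T$ there is $q=(t,\mathit{req}(l))\in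 T$ with $q<_T a$ and no event of thread $t$ strictly between $q$ and $a$, and for every $q=(t,\mathit{req}(l))\in T$, the event of thread $t$ immediately following $q$ in $T$ (if any) is of the form $(t,\mathit{acq}(l))$. Standing assumption: $T$ is well formed and every acquire has a matching release in $T$. Correct reorderings. For a read $e=(\cdot,\mathit{rd}(x))\in T$, $\mathrm{lw}_T(e)$ is the write $f=(\cdot,\mathit{wr}(x))$ with $f<_T e$ and no write on $x$ strictly between them in $T$. A trace $T'$ is a correctly reordered prefix of $T$ if (CRP-WF) $T'$ is well formed and $\mathrm{evts}(T')\subseteq\mathrm{evts}(T)$; (CRP-PO) for every thread $t$ of $T'$, the subsequence of thread-$t$ events of $T'$ is a prefix of that of $T$; (CRP-LW) for every read $e\in T'$ with $f=\mathrm{lw}_T(e)$ we have $f=\mathrm{lw}_{T'}(e)$. $\mathrm{crp}(T)$ is the set of correctly reordered prefixes of $T$. Trace-based lock sets. Write $e\prec_T f$ if for every $T'\in\mathrm{crp}(T)$ with $f\in T'$ we have $e\in T'$ and $e<_{T'}f$. For $a=(t,\mathit{acq}(l))$, $r=(t,\mathit{rel}(l))\in T$, $e\in\mathrm{CS}_T(a,r)$ iff (CS-Enclosed) $a\prec_T e$ and $e\prec_T r$, and (CS-Match) there is no release $r'=(t,\mathit{rel}(l))\in T$ and $T'\in\mathrm{crp}(T)$ with $a<_{T'}r'<_{T'}e$. $\mathrm{LH}_T(e)=\{(l,t)\mid \exists a,r\in T,\ a=(t,\mathit{acq}(l)),\ e\in\mathrm{CS}_T(a,r)\}$. Partial-order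 lock sets. For a strict partial order $<$ on $\mathrm{evts}(T)$ and $a=(t,\mathit{acq}(l))$, $r=(t,\mathit{rel}(l))\in T$: $e\in\mathrm{CS}_{<}(a,r)$ iff (PO-CS-Enclosed) $a<e$ and $e<r$, and (PO-CS-Match) there is no release $r'=(t,\mathit{rel}(l))\in T$ and $T'\in\mathrm{crp}(T)$ with $a<_{T'}r'<_{T'}e$. $\mathrm{LH}_{<}(e)=\{(l,t)\mid \exists a,r\in T,\ a=(t,\mathit{acq}(l)),\ e\in\mathrm{CS}_{<}(a,r)\}$. The order $<$ satisfies the MHB-Criteria if whenever $e<f$, for every $T'\in\mathrm{crp}(T)$ with $f\in T'$ we have $e\in T'$ and $e<_{T'}f$. Deadlock patterns. A lock set function $L$ maps events of $T$ to sets of pairs (lock, thread id). Write $l\in L(e)$ if $(l,t)\in L(e)$ for some $t$. For such sets $M,N$ let $M\Cap N=\{l\mid (l,s)\in M,(l,t)\in N, s\neq t\}$. For $n>1$ and request events $q_i=(t_i,\mathit{req}(l_i))\in T$, the set $\{q_1,\dots,q_n\}$ is a deadlock pattern for $L$ if (DP-Thread) $\mathrm{thd}(q_i)\ne\mathrm{thd}(q_j)$ for $i\ne j$; (DP-Cycle) $l_i\in L(q_{(i \bmod n)+1})$ for every $i$; (DP-Guard) $L(q_i)\Cap L(q_j)=\emptyset$ for $i\neq j$. It is a predictable deadlock for $L$ if in addition there is a witness $T'\in\mathrm{crp}(T)$ in which each $q_i$ is final. $\mathrm{PD}(L)$ denotes the set of predictable deadlocks in $T$ for $L$. *)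

From Stdlib Require Import List Arith Lia.
Import ListNotations.

Inductive op : Type :=
| Rd (x : nat) | Wr (x : nat)
| Req (l : nat) | Acq (l : nat) | Rel (l : nat).

Record event : Type := Ev { eid : nat; ethd : nat; eop : op }.

Definition trace := list event.

Definition is_trace (T : trace) : Prop := NoDup (map eid T).

Definition before (T : trace) (e f : event) : Prop :=
  exists i j, i < j /\ nth_error T i = Some e /\ nth_error T j = Some f.

Definition final (T : trace) (e : event) : Prop :=
  In e T /\ forall f, In f T -> before T e f -> ethd f <> ethd e.

Definition wf_acq (T : trace) : Prop :=
  forall a a' l, In a T -> In a' T -> eop a = Acq l -> eop a' = Acq l ->
    before T a a' ->
    exists r, In r T /\ eop r = Rel l /\ ethd r = ethd a /\
              before T a r /\ before T r a'.

Definition wf_rel (T : trace) : Prop :=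
  forall r l, In r T -> eop r = Rel l ->
    exists a, In a T /\ eop a = Acq l /\ ethd a = ethd r /\ before T a r /\
      ~ (exists r', In r' T /\ eop r' = Rel l /\ before T a r' /\ before T r' r).

Definition wf_req (T : trace) : Prop :=
  (forall a l, In a T -> eop a = Acq l ->
     exists q, In q T /\ eop q = Req l /\ ethd q = ethd a /\ before T q a /\
       ~ (exists g, In g T /\ ethd g = ethd a /\ before T q g /\ before T g a))
  /\
  (forall q l g, In q T -> eop q = Req l -> In g T -> ethd g = ethd q ->
     before T q g ->
     ~ (exists h, In h T /\ ethd h = ethd q /\ before T q h /\ before T h g) ->
     eop g = Acq l).

Definition well_formed (T : trace) : Prop :=
  wf_acq T /\ wf_rel T /\ wf_req T.

Definition acq_matched (T : trace) : Prop :=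
  forall a l, In a T -> eop a = Acq l ->
    exists r, In r T /\ eop r = Rel l /\ ethd r = ethd a /\ before T a r /\
      ~ (exists r', In r' T /\ eop r' = Rel l /\ before T a r' /\ before T r' r).

Definition last_write (T : trace) (e f : event) : Prop :=
  exists x, eop e = Rd x /\ In f T /\ eop f = Wr x /\ before T f e /\
    ~ (exists g, In g T /\ eop g = Wr x /\ before T f g /\ before T g e).

Definition proj (t : nat) (T : trace) : trace :=
  filter (fun e => Nat.eqb (ethd e) t) T.

Definition crp (T T' : trace) : Prop :=
  is_trace T' /\
  well_formed T' /\ incl T' T /\
  (forall t, exists s, proj t T = proj t T' ++ s) /\
  (forall e f, In e T' -> last_write T e f -> last_write T' e f).

Definition mhb (T : trace) (e f : event) : Prop :=
  forall T', crp T T' -> In f T' -> In e T' /\ before T' e f.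

(* Lock sets are sets of pairs (lock, thread id). *)
Definition lockset := (nat * nat) -> Prop.
Definition lockset_fun := event -> lockset.

Definition cs_match (T : trace) (a : event) (l : nat) (e : event) : Prop :=
  ~ (exists r' T', In r' T /\ eop r' = Rel l /\ ethd r' = ethd a /\
                   crp T T' /\ before T' a r' /\ before T' r' e).

Definition CS_T (T : trace) (l : nat) (a r e : event) : Prop :=
  mhb T a e /\ mhb T e r /\ cs_match T a l e.

Definition LH_T (T : trace) : lockset_fun :=
  fun e p => exists a r, In a T /\ In r T /\
    eop a = Acq (fst p) /\ ethd a = snd p /\
    eop r = Rel (fst p) /\ ethd r = snd p /\ CS_T T (fst p) a r e.

Definition CS_po (T : trace) (lt : event -> event -> Prop) (l : nat)
  (a r e : event) : Prop :=
  lt a e /\ lt e r /\ cs_match T a l e.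

Definition LH_po (T : trace) (lt : event -> event -> Prop) : lockset_fun :=
  fun e p => exists a r, In a T /\ In r T /\
    eop a = Acq (fst p) /\ ethd a = snd p /\
    eop r = Rel (fst p) /\ ethd r = snd p /\ CS_po T lt (fst p) a r e.

Definition strict_po_on (T : trace) (lt : event -> event -> Prop) : Prop :=
  (forall e f, lt e f -> In e T /\ In f T) /\
  (forall e, ~ lt e e) /\
  (forall e f g, lt e f -> lt f g -> lt e g).

Definition MHB_criteria (T : trace) (lt : event -> event -> Prop) : Prop :=
  forall e f, lt e f -> mhb T e f.

Definition lock_in (l : nat) (M : lockset) : Prop := exists t, M (l, t).

Definition guard_empty (M N : lockset) : Prop :=
  ~ (exists l s t, M (l, s) /\ N (l, t) /\ s <> t).

Definition dflt : event := Ev 0 0 (Rd 0).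

(* A deadlock pattern, given as an enumeration q_1 .. q_n (index 0 .. n-1). *)
Definition deadlock_pattern (T : trace) (L : lockset_fun) (qs : list event)
  : Prop :=
  let n := length qs in
  1 < n /\
  (forall i, i < n -> In (nth i qs dflt) T /\
              exists l, eop (nth i qs dflt) = Req l) /\
  (forall i j, i < n -> j < n -> i <> j ->
     ethd (nth i qs dflt) <> ethd (nth j qs dflt)) /\
  (forall i l, i < n -> eop (nth i qs dflt) = Req l ->
     lock_in l (L (nth (S i mod n) qs dflt))) /\
  (forall i j, i < n -> j < n -> i <> j ->
     guard_empty (L (nth i qs dflt)) (L (nth j qs dflt))).

Definition in_PD (T : trace) (L : lockset_fun) (S : event -> Prop) : Prop :=
  exists qs, (forall e, S e <-> In e qs) /\
    deadlock_pattern T L qs /\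
    exists T', crp T T' /\ forall q, In q qs -> final T' q.

(** Only the guard condition needs an argument, since LH_< is pointwise
    contained in LH_T by the MHB-Criteria.  Suppose two requests [q], [q']
    that are final in a witness [T'] have [(l, s)] in LH_T(q) and [(l, t)] in
    LH_T(q') with [s <> t].  By CS-Enclosed both acquires of [l] occur in
    [T'], and by well-formedness of [T'] the earlier one is released before
    the later one, hence before the request it encloses.  Moving that request,
    which is final, to the end of [T'] yields another correctly reordered
    prefix in which acquire, release and request occur in this order,
    contradicting CS-Match.  So the guard condition holds for LH_T, whatever
    the guard condition for LH_< was. *)

From Stdlib Require Import List Arith Lia.
From Stdlib Require Import Classical Permutation.
Import ListNotations.

Lemma before_nil x y : ~ before [] x y.
Proof. intros (i & j & _ & Hi & _). destruct i; discriminate. Qed.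

Lemma before_In L x y : before L x y -> In x L /\ In y L.
Proof. intros (i & j & _ & Hi & Hj). split; eapply nth_error_In; eauto. Qed.

Lemma before_cons z L x y :
  before (z :: L) x y <-> (x = z /\ In y L) \/ before L x y.
Proof.
  split.
  - intros (i & j & Hij & Hi & Hj).
    destruct i as [|i], j as [|j]; simpl in *; try lia.
    + injection Hi as <-. left. split; [reflexivity | eapply nth_error_In; eauto].
    + right. exists i, j. repeat split; auto; lia.
  - intros [[-> Hy] | (i & j & Hij & Hi & Hj)].
    + apply In_nth_error in Hy as [j Hj]. exists 0, (S j). repeat split; auto; lia.
    + exists (S i), (S j). repeat split; auto; lia.
Qed.

Lemma before_app L1 L2 x y :
  before (L1 ++ L2) x y <->
  before L1 x y \/ before L2 x y \/ (In x L1 /\ In y L2).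
Proof.
  induction L1 as [|z L1 IH]; simpl.
  - pose proof (before_nil x y). tauto.
  - rewrite !before_cons, IH, in_app_iff. split.
    + intros [[-> [Hy|Hy]] | [H | [H | [H1 H2]]]]; auto.
    + intros [[[-> Hy] | H] | [H | [[<- | H1] H2]]]; auto.
Qed.

Lemma before_total L x y :
  In x L -> In y L -> x <> y -> before L x y \/ before L y x.
Proof.
  intros Hx Hy Hxy.
  apply In_nth_error in Hx as [i Hi]. apply In_nth_error in Hy as [j Hj].
  destruct (lt_eq_lt_dec i j) as [[Hij | <-] | Hji].
  - left. exists i, j. auto.
  - congruence.
  - right. exists j, i. auto.
Qed.

Section MoveFinalRequestToEnd.

Variables (A B : trace) (q : event).

Local Notation orig := (A ++ q :: B).
Local Notation moved := (A ++ B ++ [q]).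

Lemma before_orig x y :
  before orig x y <->
  before A x y \/ (In x A /\ (q = y \/ In y B)) \/ (x = q /\ In y B) \/
  before B x y.
Proof. rewrite before_app, before_cons. simpl. tauto. Qed.

Lemma before_moved x y :
  before moved x y <->
  before A x y \/ before B x y \/ (In x A /\ In y B) \/
  ((In x A \/ In x B) /\ y = q).
Proof.
  pose proof (before_nil x y) as Hnil.
  rewrite !before_app, in_app_iff, before_cons. simpl. intuition (subst; tauto).
Qed.

Lemma In_moved x : In x moved <-> In x orig.
Proof. rewrite !in_app_iff. simpl. tauto. Qed.

Lemma before_moved_iff x y :
  x <> q -> y <> q -> (before moved x y <-> before orig x y).
Proof. intros Hx Hy. rewrite before_moved, before_orig. intuition congruence. Qed.

Hypothesis q_notin_A : ~ In q A.
Hypothesis q_notin_B : ~ In q B.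

Lemma before_moved_last x : before moved x q <-> In x A \/ In x B.
Proof.
  rewrite before_moved. split; [|tauto].
  intros [H | [H | [[_ H] | [H _]]]]; try apply before_In in H; tauto.
Qed.

Lemma not_before_moved_from_last y : ~ before moved q y.
Proof.
  rewrite before_moved.
  intros [H | [H | [[H _] | [H _]]]]; try apply before_In in H; tauto.
Qed.

Lemma before_orig_from_q y : before orig q y -> In y B.
Proof.
  rewrite before_orig.
  intros [H | [[H _] | [[_ H] | H]]]; try apply before_In in H; tauto.
Qed.

Lemma before_orig_to_q x : before orig x q -> In x A.
Proof.
  rewrite before_orig.
  intros [H | [[H _] | [[_ H] | H]]]; try apply before_In in H; tauto.
Qed.

Variable lq : nat.
Hypothesis q_req : eop q = Req lq.
Hypothesis q_final : forall f, In f B -> ethd f <> ethd q.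

Lemma ne_q_of_op x o : eop x = o -> o <> Req lq -> x <> q.
Proof. intros Hx Ho ->. congruence. Qed.

Ltac ne_q := eapply ne_q_of_op; [eassumption | discriminate].

Lemma wf_acq_moved : wf_acq orig -> wf_acq moved.
Proof.
  intros Wacq a a' l Ha Ha' Ea Ea' Haa'.
  rewrite In_moved in Ha, Ha'.
  assert (a <> q) by ne_q. assert (a' <> q) by ne_q.
  rewrite before_moved_iff in Haa' by assumption.
  destruct (Wacq a a' l Ha Ha' Ea Ea' Haa') as (r & Hr & Er & Tr & Har & Hra').
  assert (r <> q) by ne_q.
  exists r. rewrite In_moved, !before_moved_iff by assumption. auto.
Qed.

Lemma wf_rel_moved : wf_rel orig -> wf_rel moved.
Proof.
  intros Wrel r l Hr Er. rewrite In_moved in Hr.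
  assert (r <> q) by ne_q.
  destruct (Wrel r l Hr Er) as (a & Ha & Ea & Ta & Har & Hnone).
  assert (a <> q) by ne_q.
  exists a. rewrite In_moved, before_moved_iff by assumption.
  repeat split; auto.
  intros (r' & Hr' & Er' & Har' & Hr'r). apply Hnone.
  rewrite In_moved in Hr'. assert (r' <> q) by ne_q.
  rewrite !before_moved_iff in Har', Hr'r by assumption. eauto.
Qed.

Lemma wf_req_moved : wf_req orig -> wf_req moved.
Proof.
  intros [Wreq_acq Wreq_next]. split.
  - intros a l Ha Ea. rewrite In_moved in Ha.
    assert (a <> q) by ne_q.
    destruct (Wreq_acq a l Ha Ea) as (q0 & Hq0 & Eq0 & Tq0 & Hq0a & Hnone).
    assert (q0 <> q).
    { intros ->. apply (q_final a); auto. apply before_orig_from_q; assumption. }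
    exists q0. rewrite In_moved, before_moved_iff by assumption.
    repeat split; auto.
    intros (g & Hg & Tg & Hq0g & Hga). apply Hnone.
    assert (g <> q) by (intros ->; eapply not_before_moved_from_last; eauto).
    rewrite In_moved in Hg. rewrite !before_moved_iff in Hq0g, Hga by assumption.
    eauto.
  - intros q0 l g Hq0 Eq0 Hg Tg Hq0g Hnone.
    rewrite In_moved in Hq0, Hg.
    assert (q0 <> q) by (intros ->; eapply not_before_moved_from_last; eauto).
    destruct (classic (g = q)) as [-> | Hgq].
    + assert (Hq0A : In q0 A).
      { apply before_moved_last in Hq0g as [? | HB]; auto.
        exfalso. apply (q_final q0); auto. }
      apply (Wreq_next q0 l q Hq0 Eq0 Hg Tg); [rewrite before_orig; auto |].
      (* an event between [q0] and [q] in [orig] lies in [A], so it also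
         precedes [q] in [moved] *)
      intros (h & Hh & Th & Hq0h & Hhq). apply Hnone.
      pose proof (before_orig_to_q h Hhq) as HhA.
      assert (h <> q) by (intros ->; contradiction).
      exists h. rewrite In_moved, before_moved_iff, before_moved_last by assumption.
      auto.
    + rewrite before_moved_iff in Hq0g by assumption.
      apply (Wreq_next q0 l g Hq0 Eq0 Hg Tg Hq0g).
      intros (h & Hh & Th & Hq0h & Hhg). apply Hnone.
      assert (h <> q).
      { intros ->. apply (q_final g); [apply before_orig_from_q; assumption|].
        congruence. }
      exists h. rewrite In_moved, !before_moved_iff by assumption. auto.
Qed.

Lemma well_formed_moved : well_formed orig -> well_formed moved.
Proof.
  intros (Wacq & Wrel & Wreq). split; [|split].
  - apply wf_acq_moved; assumption.
  - apply wf_rel_moved; assumption.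
  - apply wf_req_moved; assumption.
Qed.

Lemma proj_moved t : proj t moved = proj t orig.
Proof.
  unfold proj. rewrite !filter_app. simpl.
  destruct (Nat.eqb_spec (ethd q) t) as [<- | _]; [|now rewrite app_nil_r].
  rewrite (filter_ext_in _ (fun _ => false) B), filter_false; [reflexivity|].
  intros f Hf. apply Nat.eqb_neq, q_final, Hf.
Qed.

Lemma last_write_moved e f : last_write orig e f -> last_write moved e f.
Proof.
  intros (x & Ex & Hf & Ef & Hfe & Hnone).
  assert (e <> q) by ne_q. assert (f <> q) by ne_q.
  exists x. rewrite In_moved, before_moved_iff by assumption.
  repeat split; auto.
  intros (g & Hg & Eg & Hfg & Hge). apply Hnone.
  rewrite In_moved in Hg. assert (g <> q) by ne_q.
  rewrite !before_moved_iff in Hfg, Hge by assumption. eauto.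
Qed.

Lemma crp_moved T : crp T orig -> crp T moved.
Proof.
  intros (Htr & Hwf & Hincl & Hpo & Hlw). split; [|split; [|split; [|split]]].
  - unfold is_trace. eapply Permutation_NoDup; [|exact Htr].
    apply Permutation_map. rewrite app_assoc.
    eapply Permutation_trans; [apply Permutation_sym, Permutation_middle|].
    apply Permutation_cons_append.
  - apply well_formed_moved; assumption.
  - intros x Hx. apply Hincl, In_moved, Hx.
  - intros t. rewrite proj_moved. apply Hpo.
  - intros e f He Hef. rewrite In_moved in He. apply last_write_moved; auto.
Qed.

End MoveFinalRequestToEnd.

Lemma crp_final_req_to_end T T' q l :
  crp T T' -> final T' q -> eop q = Req l ->
  exists T'', crp T T'' /\
    (forall x y, x <> q -> y <> q -> before T' x y -> before T'' x y) /\
    (forall x, In x T' -> x <> q -> before T'' x q).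
Proof.
  intros Hc [Hq Hfin] Eq.
  assert (Hnd : NoDup T') by (eapply NoDup_map_inv; apply Hc).
  apply in_split in Hq as (A & B & ->).
  apply NoDup_remove_2 in Hnd as Hq_once. rewrite in_app_iff in Hq_once.
  assert (HB : forall f, In f B -> ethd f <> ethd q).
  { intros f Hf. apply Hfin; [apply in_app_iff; simpl; auto|].
    rewrite before_orig; auto. }
  exists (A ++ B ++ [q]). split; [|split].
  - eapply crp_moved; eauto; tauto.
  - intros x y Hx Hy. apply before_moved_iff; assumption.
  - intros x Hx Hxq. apply before_moved_last; [tauto | tauto |].
    rewrite in_app_iff in Hx. simpl in Hx. intuition congruence.
Qed.

Lemma final_req_not_cs_match T T' q lq l a a' :
  crp T T' -> final T' q -> eop q = Req lq ->
  In a T' -> In a' T' -> eop a = Acq l -> eop a' = Acq l -> before T' a a' ->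
  ~ cs_match T a l q.
Proof.
  intros Hc Hq Eq Ha Ha' Ea Ea' Haa' Hmatch.
  pose proof Hc as (_ & (Wacq & _) & Hincl & _).
  destruct (Wacq a a' l Ha Ha' Ea Ea' Haa') as (r & Hr & Er & Tr & Har & _).
  destruct (crp_final_req_to_end T T' q lq Hc Hq Eq) as (T'' & Hc'' & Hkeep & Hlast).
  assert (a <> q) by congruence. assert (r <> q) by congruence.
  apply Hmatch. exists r, T''. split; [apply Hincl, Hr|].
  do 3 (split; [assumption|]). auto.
Qed.

Lemma LH_T_guard_empty T T' q q' lq lq' :
  crp T T' -> final T' q -> final T' q' -> eop q = Req lq -> eop q' = Req lq' ->
  guard_empty (LH_T T q) (LH_T T q').
Proof.
  intros Hc Hq Hq' Eq Eq' (l & s & t & Hs & Ht & Hst).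
  destruct Hs as (a & _ & _ & _ & Ea & Ta & _ & _ & Haq & _ & Hmatch).
  destruct Ht as (a' & _ & _ & _ & Ea' & Ta' & _ & _ & Ha'q' & _ & Hmatch').
  simpl in *.
  destruct (Haq T' Hc (proj1 Hq)) as [Ha _].
  destruct (Ha'q' T' Hc (proj1 Hq')) as [Ha' _].
  assert (Hne : a <> a') by congruence.
  destruct (before_total T' a a' Ha Ha' Hne) as [Haa' | Ha'a].
  - exact (final_req_not_cs_match T T' q lq l a a' Hc Hq Eq Ha Ha' Ea Ea' Haa' Hmatch).
  - exact (final_req_not_cs_match T T' q' lq' l a' a Hc Hq' Eq' Ha' Ha Ea' Ea Ha'a Hmatch').
Qed.

Lemma LH_po_sub_LH_T T lt e p :
  MHB_criteria T lt -> LH_po T lt e p -> LH_T T e p.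
Proof.
  intros Hmhb (a & r & Ha & Hr & Ea & Ta & Er & Tr & Hae & Her & Hmatch).
  exists a, r. unfold CS_T. auto 10.
Qed.

Theorem lemma6p6 (T : trace) (lt : event -> event -> Prop) :
  is_trace T -> well_formed T -> acq_matched T ->
  strict_po_on T lt -> MHB_criteria T lt ->
  forall S : event -> Prop, in_PD T (LH_po T lt) S -> in_PD T (LH_T T) S.
Proof.
  intros _ _ _ _ Hmhb S (qs & HS & Hdp & T' & Hc & Hfin).
  destruct Hdp as (Hn & Hreq & Hthd & Hcycle & _).
  exists qs. split; [exact HS|]. split; [|exists T'; auto].
  split; [exact Hn|]. split; [exact Hreq|]. split; [exact Hthd|]. split.
  - intros i l Hi Eq. destruct (Hcycle i l Hi Eq) as [t Ht].
    exists t. eapply LH_po_sub_LH_T; eauto.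
  - intros i j Hi Hj _.
    destruct (Hreq i Hi) as [_ [li Ei]]. destruct (Hreq j Hj) as [_ [lj Ej]].
    eapply LH_T_guard_empty; eauto using nth_In.
Qed.
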